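(* Let $m\ge3$ and $k\ge1$. The PIN model on any $k$-regular, $k$-edge-connected loopless graph on vertex set $\mathcal M$ is strict Type $\mathcal S$.
   Context: Let $\mathcal M=\{1,\dots,m\}$. The PIN model on a graph $\mathcal G=(\mathcal M,\mathcal E)$, with $\mathcal E$ a finite multiset of 2-element subsets of $\mathcal M$, is defined as follows. Let $\mathcal E^{(n)}$ contain $n$ copies of each edge. Independent Bernoulli(1/2) variables $\xi_e$ are attached to the $e\in\mathcal E^{(n)}$, and $X^n_i=(\xi_e:e\in\mathcal E^{(n)},\ i\in e)$; the single-letter source $X_{\mathcal M}$ is the case $n=1$. $\mathcal G$ is $k$-regular if every vertex lies in exactly $k$ edges. $\mathcal G$ is $k$-edge-connected if for every nonempty proper subset $U\subset\mathcal M$ at least $k$ edges have one endpoint in $U$ and the other in $\mathcal M\setminus U$; equivalently, deleting fewer than $k$ edges never disconnects the graph. $\Delta(\mathcal P)=\frac1{|\mathcal P|-1}[\sum_{A\in\mathcal P}H(X_A)-H(X_{\mathcal M})]$ for partitions with at least 2 cells, where $X_A=(X_i:i\in A)$. The source is strict Type $\mathcal S$ if the singleton partition is the unique minimizer of $\Delta$. *)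

From mathcomp Require Import all_boot.
From Stdlib Require Import Reals.
Set Implicit Arguments. Unset Strict Implicit. Unset Printing Implicit Defensive.

(* A graph on M = 'I_m is a finite multiset (list) of edges, each an
   unordered pair given as an ordered pair of vertices.  Edges are indexed
   by 'I_(size G). *)
Definition graph (m : nat) := seq ('I_m * 'I_m).

Definition edge (m : nat) (G : graph m) (j : 'I_(size G)) : 'I_m * 'I_m :=
  tnth (in_tuple G) j.

Definition loopless (m : nat) (G : graph m) : Prop :=
  forall j : 'I_(size G), (edge j).1 != (edge j).2.

Definition incident (m : nat) (G : graph m) (i : 'I_m) (j : 'I_(size G)) : bool :=
  ((edge j).1 == i) || ((edge j).2 == i).

Definition regular (m : nat) (G : graph m) (k : nat) : Prop :=
  forall i : 'I_m, #|[set j : 'I_(size G) | incident i j]| = k.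

Definition edge_connected (m : nat) (G : graph m) (k : nat) : Prop :=
  forall U : {set 'I_m}, U != set0 -> U != [set: 'I_m] ->
    k <= #|[set j : 'I_(size G) | ((edge j).1 \in U) != ((edge j).2 \in U)]|.

(* Single-letter PIN source (n = 1): the sample space is {ffun E -> bool}
   with the uniform distribution, i.e. independent Bernoulli(1/2) bits xi_e. *)
Definition sample (m : nat) (G : graph m) := {ffun 'I_(size G) -> bool}.

(* X_i = (xi_e : e in E, i in e); non-incident coordinates are absent (None). *)
Definition Xi (m : nat) (G : graph m) (i : 'I_m) (xi : sample G)
  : {ffun 'I_(size G) -> option bool} :=
  [ffun j => if incident i j then Some (xi j) else None].

Definition XA (m : nat) (G : graph m) (A : {set 'I_m}) (xi : sample G)
  : {ffun 'I_m -> option {ffun 'I_(size G) -> option bool}} :=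
  [ffun i => if i \in A then Some (Xi i xi) else None].

(* Shannon entropy (in bits) of f(w), w uniform on the finite type Omega:
   H = - sum_y p(y) log2 p(y), p(y) = #{w | f w = y} / #|Omega|
   (Stdlib's ln 0 = 0, so 0 log 0 = 0). *)
Definition entropy (Omega T : finType) (f : Omega -> T) : R :=
  Ropp (\big[Rplus/0%R]_(y : T)
          (let p := Rdiv (INR #|[set w | f w == y]|) (INR #|Omega|) in
           Rmult p (Rdiv (ln p) (ln 2)))).

Definition HA (m : nat) (G : graph m) (A : {set 'I_m}) : R :=
  entropy (XA A (G:=G)).

Definition Delta (m : nat) (G : graph m) (P : {set {set 'I_m}}) : R :=
  Rdiv (Rminus (\big[Rplus/0%R]_(A in P) HA G A) (HA G [set: 'I_m]))
       (Rminus (INR #|P|) 1).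

Definition singleton_partition (m : nat) : {set {set 'I_m}} :=
  [set [set i] | i : 'I_m].

Definition strict_type_S (m : nat) (G : graph m) : Prop :=
  forall P : {set {set 'I_m}}, partition P [set: 'I_m] -> 2 <= #|P| ->
    P != singleton_partition m ->
    Rlt (Delta G (singleton_partition m)) (Delta G P).

From Pilot Require Import Defs.
From mathcomp Require Import all_boot.
From Stdlib Require Import Reals.
From mathcomp Require Import zify.
From Stdlib Require Import Lra.
Set Implicit Arguments. Unset Strict Implicit. Unset Printing Implicit Defensive.

(* The bits are uniform and independent, so H(X_A) is the number of edges
   touching A.  Counting, for a partition P, every edge once per block it
   touches gives sum_(A in P) H(X_A) = H(X_M) + c(P)/2, where c(P) is the
   number of (block, crossing edge) incidences; hence
   Delta(P) = c(P) / (2 (|P| - 1)).  For the singleton partition c = m k by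
   regularity, while for any other partition c(P) >= |P| k by
   k-edge-connectivity, and |P| < m.  Since p / (p - 1) decreases in p, the
   singleton partition is the strict minimizer. *)

Lemma INR_sum (I : finType) (P : pred I) (F : I -> nat) :
  INR (\sum_(i | P i) F i) = \big[Rplus/0%R]_(i | P i) INR (F i).
Proof. by apply: (big_morph INR); [exact: plus_INR | done]. Qed.

Lemma Rmult_suml (I : finType) (P : pred I) (F : I -> R) c :
  Rmult (\big[Rplus/0%R]_(i | P i) F i) c =
  \big[Rplus/0%R]_(i | P i) Rmult (F i) c.
Proof. by apply: (big_morph (fun x => Rmult x c)) => [x y|]; ring. Qed.

Lemma cards_sum (I : finType) (b : pred I) : #|[set i | b i]| = \sum_i b i.
Proof. by rewrite -sum1dep_card big_mkcond; apply: eq_bigr => i _; case: (b i). Qed.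

Lemma INR_expn2 a : INR (expn 2 a) = pow 2 a.
Proof. by elim: a => [|a IHa] //=; rewrite expnS mult_INR IHa. Qed.

Lemma ln2_neq0 : ln 2 <> 0%R.
Proof. by apply: Rgt_not_eq; rewrite -ln_1; apply: ln_increasing; lra. Qed.

Lemma entropy_uniform_fibers (Omega T : finType) (f : Omega -> T) (s : nat) :
  0 < s -> 0 < #|Omega| -> (forall w, #|[set w' | f w' == f w]| = s) ->
  entropy f = Rdiv (ln (Rdiv (INR #|Omega|) (INR s))) (ln 2).
Proof.
move=> s_gt0 Omega_gt0 fiberE.
have N_pos : (0 < INR #|Omega|)%R by apply: lt_0_INR; apply/ltP.
have s_pos : (0 < INR s)%R by apply: lt_0_INR; apply/ltP.
have sum_fibers : \sum_(y : T) #|[set w | f w == y]| = #|Omega|.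
  rewrite -sum1_card (partition_big f predT) //=.
  by apply: eq_bigr => y _; rewrite sum1dep_card.
set c := Rdiv (ln (Rdiv (INR s) (INR #|Omega|))) (ln 2).
rewrite /entropy (eq_bigr (fun y =>
  Rmult (Rmult (INR #|[set w | f w == y]|) (/ INR #|Omega|)) c)); last first.
  move=> y _ /=; case: (set_0Vmem [set w | f w == y]) => [->|[w]].
    by rewrite cards0 /Rdiv !Rmult_0_l.
  by rewrite inE => /eqP <-; rewrite fiberE.
rewrite -Rmult_suml -Rmult_suml -INR_sum sum_fibers /c.
have -> : Rdiv (INR s) (INR #|Omega|) = Rinv (Rdiv (INR #|Omega|) (INR s)).
  by field; lra.
rewrite ln_Rinv; last exact: Rdiv_lt_0_compat.
by field; split; [exact: ln2_neq0 | lra].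
Qed.

Lemma sum_mem_partition (T : finType) (P : {set {set T}}) (D : {set T}) x :
  partition P D -> x \in D -> \sum_(A in P) (x \in A) = 1.
Proof.
move=> /and3P[/eqP coverP trivP _] xD.
have x_cover : x \in cover P by rewrite coverP.
rewrite (bigD1 (pblock P x)) ?pblock_mem //= mem_pblock x_cover big1 // => A.
case/andP=> AP neq_A; case: (boolP (x \in A)) => // xA.
by rewrite (def_pblock trivP AP xA) eqxx in neq_A.
Qed.

Lemma partition_block_neq (T : finType) (P : {set {set T}}) (D A : {set T}) :
  partition P D -> 1 < #|P| -> A \in P -> A != D.
Proof.
move=> /and3P[/eqP coverP trivP set0P] P_gt1 AP; apply/eqP => AD.
have /set0Pn[B /setD1P[neq_BA BP]] : P :\ A != set0.
  by rewrite -card_gt0; move: P_gt1; rewrite (cardsD1 A) AP.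
have /set0Pn[b bB] : B != set0 by apply: contraNneq set0P => <-.
have /disjointFl/(_ bB) : [disjoint A & B].
  by apply: (trivIsetP trivP) => //; rewrite eq_sym.
by rewrite AD -coverP => /negP; apply; apply/bigcupP; exists B.
Qed.

Lemma partition_card_lt (T : finType) (P : {set {set T}}) :
  partition P [set: T] -> P != [set [set x] | x : T] -> #|P| < #|T|.
Proof.
move=> partP; rewrite ltnNge; apply: contraNN => le_T_P.
move: (partP) => /and3P[/eqP coverP _ set0P].
have block_gt0 A : A \in P -> 0 < #|A|.
  by move=> AP; rewrite card_gt0; apply: contraNneq set0P => <-.
have sum_pred : \sum_(A in P) #|A|.-1 = 0.
  have sum_card : \sum_(A in P) #|A| = \sum_(A in P) #|A|.-1 + #|P|.
    rewrite -[#|P|]muln1 -sum_nat_const -big_split /=.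
    by apply: eq_bigr => A /block_gt0 A_gt0; rewrite addn1 prednK.
  by have := card_partition partP; rewrite cardsT sum_card; lia.
have block1 A : A \in P -> #|A| = 1.
  move=> AP; have := block_gt0 A AP.
  by move/eqP: sum_pred; rewrite sum_nat_eq0 => /forall_inP/(_ A AP)/eqP; lia.
apply/eqP/setP => B; apply/idP/imsetP => [BP | [x _ ->]].
  by have /eqP/cards1P[x ->] := block1 B BP; exists x.
have x_cover : x \in cover P by rewrite coverP inE.
have /eqP/cards1P[y def_y] := block1 _ (pblock_mem x_cover).
have := mem_pblock P x; rewrite x_cover def_y inE => /eqP def_x.
by rewrite def_x -def_y pblock_mem.
Qed.

Lemma partition_singleton (T : finType) : partition [set [set x] | x : T] [set: T].
Proof.
apply/and3P; split.
- apply/eqP/setP => x; rewrite inE; apply/bigcupP.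
  by exists [set x]; [apply: imset_f | rewrite inE].
- apply/trivIsetP => _ _ /imsetP[x _ ->] /imsetP[y _ ->] neq_xy.
  by rewrite disjoints1 inE; apply: contraNneq neq_xy => ->.
- by apply/imsetP => -[x _ /eqP]; rewrite eq_sym -cards_eq0 cards1.
Qed.

Lemma Rdiv_lt_cross a b c d :
  (0 < b)%R -> (0 < d)%R -> (a * d < c * b)%R -> (a / b < c / d)%R.
Proof.
move=> b_gt0 d_gt0 lt_ad_cb.
have -> : (a / b = (a * d) * / (b * d))%R by field; lra.
have -> : (c / d = (c * b) * / (b * d))%R by field; lra.
by apply: Rmult_lt_compat_r => //; apply: Rinv_0_lt_compat; nra.
Qed.

Section PIN.

Variables (m : nat) (G : graph m).

Definition touches (A : {set 'I_m}) (j : 'I_(size G)) : bool :=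
  ((edge j).1 \in A) || ((edge j).2 \in A).

Definition crosses (A : {set 'I_m}) (j : 'I_(size G)) : bool :=
  ((edge j).1 \in A) != ((edge j).2 \in A).

Lemma eq_XA (A : {set 'I_m}) (xi xi' : sample G) :
  (XA A xi == XA A xi') = [forall j, touches A j ==> (xi j == xi' j)].
Proof.
apply/eqP/forallP => [/ffunP XA_eq j | agree].
  apply/implyP => /orP[] in_A.
    have := XA_eq (edge j).1; rewrite !ffunE in_A => -[/ffunP/(_ j)].
    by rewrite !ffunE /incident eqxx => -[->].
  have := XA_eq (edge j).2; rewrite !ffunE in_A => -[/ffunP/(_ j)].
  by rewrite !ffunE /incident eqxx orbT => -[->].
apply/ffunP => i; rewrite !ffunE; case: ifP => // iA; congr Some.
apply/ffunP => j; rewrite !ffunE; case: ifP => // /orP inc; congr Some.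
apply/eqP; apply: (implyP (agree j)); rewrite /touches.
by case: inc => /eqP ->; rewrite iA ?orbT.
Qed.

Lemma card_XA_fiber (A : {set 'I_m}) (xi0 : sample G) :
  #|[set xi : sample G | XA A xi == XA A xi0]| =
  expn 2 #|[set j : 'I_(size G) | ~~ touches A j]|.
Proof.
pose F j := if touches A j then pred1 (xi0 j) else predT.
have -> : #|[set xi : sample G | XA A xi == XA A xi0]| =
          #|(finfun.family F : simpl_pred (sample G))|.
  apply: eq_card => xi; rewrite inE eq_XA.
  by apply/forallP/familyP => agree j; move: (agree j); rewrite /F; case: touches.
rewrite card_family foldrE big_map big_enum /=.
rewrite (eq_bigr (fun j => if ~~ touches A j then 2 else 1)); last first.
  by move=> j _; rewrite /F; case: touches; rewrite /= ?card1 // cardT enumT unlock.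
rewrite -big_mkcond /= (prod_nat_const [pred i | ~~ touches A i]).
by congr (expn _ _); apply: eq_card => j; rewrite inE.
Qed.

Lemma HA_card_touches (A : {set 'I_m}) :
  HA G A = INR #|[set j : 'I_(size G) | touches A j]|.
Proof.
set a := #|[set j | touches A j]|; set b := #|[set j | ~~ touches A j]|.
have card_sample : #|sample G| = expn 2 a * expn 2 b.
  rewrite card_ffun card_bool -expnD -(cardsC [set j | touches A j]).
  by congr (expn 2 (_ + _)); apply: eq_card => j; rewrite !inE.
have pow2_neq0 n : INR (expn 2 n) <> 0%R.
  by rewrite INR_expn2; apply: pow_nonzero; lra.
rewrite /HA (@entropy_uniform_fibers _ _ _ (expn 2 b)); first last.
- exact: card_XA_fiber.
- by rewrite card_sample muln_gt0 !expn_gt0.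
- by rewrite expn_gt0.
rewrite card_sample mult_INR.
have -> : Rdiv (INR (expn 2 a) * INR (expn 2 b)) (INR (expn 2 b)) = INR (expn 2 a).
  by field; exact: pow2_neq0.
rewrite INR_expn2 ln_pow; last lra.
field; exact: ln2_neq0.
Qed.

Lemma HA_setT : HA G [set: 'I_m] = INR (size G).
Proof.
rewrite HA_card_touches -[in RHS](card_ord (size G)) -cardsT.
by congr INR; apply: eq_card => j; rewrite !inE /touches in_setT.
Qed.

Lemma double_sum_touches (P : {set {set 'I_m}}) :
  partition P [set: 'I_m] ->
  2 * \sum_(A in P) #|[set j | touches A j]| =
  2 * size G + \sum_(A in P) #|[set j | crosses A j]|.
Proof.
move=> partP.
have in_one_block x : \sum_(A in P) (x \in A) = 1.
  by apply: (sum_mem_partition partP); rewrite inE.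
under eq_bigr => A _ do rewrite cards_sum.
under [in RHS]eq_bigr => A _ do rewrite cards_sum.
rewrite !(exchange_big _ _ _ (fun A => A \in P)) /=.
have -> : 2 * size G = \sum_(j < size G) 2 by rewrite sum_nat_const card_ord mulnC.
rewrite big_distrr -big_split /=; apply: eq_bigr => j _.
rewrite big_distrr /= (eq_bigr (fun A : {set 'I_m} =>
  ((edge j).1 \in A) + ((edge j).2 \in A) + crosses A j)); last first.
  by move=> A _; rewrite /touches /crosses; do 2 case: (_ \in A).
by rewrite !big_split /= !in_one_block.
Qed.

Lemma Delta_partition (P : {set {set 'I_m}}) :
  partition P [set: 'I_m] ->
  Defs.Delta G P =
  ((INR (\sum_(A in P) #|[set j | crosses A j]|) / 2) / (INR #|P| - 1))%R.
Proof.
move=> partP; rewrite /Defs.Delta HA_setT.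
under eq_bigr do rewrite HA_card_touches.
rewrite -INR_sum; congr Rdiv.
have := congr1 INR (double_sum_touches partP).
by rewrite (plus_INR (2 * size G)) -!multE !mult_INR /=; lra.
Qed.

Variable k : nat.

Lemma sum_crosses_singleton :
  loopless G -> regular G k ->
  \sum_(A in singleton_partition m) #|[set j | crosses A j]| = m * k.
Proof.
move=> loopG regG; rewrite big_imset /=; last by move=> x y _ _; exact: set1_inj.
rewrite -[m in RHS]card_ord -sum_nat_const; apply: eq_bigr => i _.
rewrite -(regG i); apply: eq_card => j; rewrite !inE /crosses /incident !inE.
have := loopG j.
by case: ((edge j).1 =P i) => [->|_]; case: ((edge j).2 =P i) => [->|_];
  rewrite ?eqxx.
Qed.

Lemma sum_crosses_ge (P : {set {set 'I_m}}) :
  edge_connected G k -> partition P [set: 'I_m] -> 1 < #|P| ->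
  #|P| * k <= \sum_(A in P) #|[set j | crosses A j]|.
Proof.
move=> connG partP P_gt1; rewrite -sum_nat_const; apply: leq_sum => A AP.
apply: connG; last exact: partition_block_neq partP P_gt1 AP.
by move: partP => /and3P[_ _ set0P]; apply: contraNneq set0P => <-.
Qed.

End PIN.

Lemma card_singleton_partition m : #|singleton_partition m| = m.
Proof. by rewrite card_imset ?card_ord //; exact: set1_inj. Qed.

Lemma ratio_pred_lt (m p k c : R) :
  (1 <= k)%R -> (2 <= p)%R -> (p + 1 <= m)%R -> (p * k <= c)%R ->
  ((m * k / 2) / (m - 1) < (c / 2) / (p - 1))%R.
Proof.
move=> k_ge1 p_ge2 p_lt_m pk_le_c.
apply: Rdiv_lt_cross; [lra | lra |].
have : (0 <= (c - p * k) * (m - 1))%R by apply: Rmult_le_pos; lra.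
have : (0 < k * (m - p))%R by apply: Rmult_lt_0_compat; lra.
nra.
Qed.

Theorem corollary4 (m k : nat) (G : graph m) :
  3 <= m -> 1 <= k -> loopless G -> regular G k -> edge_connected G k ->
  strict_type_S G.
Proof.
move=> _ k_gt0 loopG regG connG P partP P_ge2 neqP.
have P_lt_m : #|P| < m by rewrite -[m in _ < m]card_ord; exact: partition_card_lt.
rewrite !Delta_partition //; last exact: partition_singleton.
rewrite (sum_crosses_singleton loopG regG) card_singleton_partition -multE mult_INR.
have cross_ge := sum_crosses_ge connG partP P_ge2.
apply: ratio_pred_lt.
- by apply: (le_INR 1); apply/leP.
- by apply: (le_INR 2); apply/leP.
- by rewrite -S_INR; apply: le_INR; apply/leP.
- by rewrite -mult_INR multE; apply: le_INR; apply/leP.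
Qed.
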